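(* Let $(X,d)$ be a bicomplete quasi-pseudometric space. Let $J:X\to X$ be a continuous single-valued map such that $r\,d(x,y)\le d(Jx,Jy)$ for all $x,y\in X$, for some constant $r>0$. Let $F:X\to CB(X)$ be a set-valued map such that $$H(Fx,Fy)\le \alpha\, d(Jx,Jy)\quad\text{for all }x,y\in X,$$ where $\alpha\in(0,1)$ and $r\alpha<1$. If $J$ and $F$ have the approximate mix-point property, then $F$ has a $J$-fixed point, i.e. there is $x\in X$ with $Jx\in Fx$.
   Context: A quasi-pseudometric on a nonempty set $X$ is a map $d:X\times X\to[0,\infty)$ with $d(x,x)=0$ and $d(x,z)\le d(x,y)+d(y,z)$ for all $x,y,z$; it is $T_0$ if $d(x,y)=0=d(y,x)$ implies $x=y$. Write $d^s(x,y)=\max\{d(x,y),d(y,x)\}$. The space $(X,d)$ is bicomplete if $d$ is $T_0$ and the metric $d^s$ is complete. For $x\in X$ and nonempty $A\subseteq X$: $d(x,A)=\inf_{a\in A}d(x,a)$, $d(A,x)=\inf_{a\in A}d(a,x)$. For nonempty $A,B\subseteq X$: $H(A,B)=\max\{\sup_{a\in A}d(a,B),\ \sup_{b\in B}d(A,b)\}$. $CB(X)$ denotes the family of nonempty $d^s$-bounded, $\tau(d^s)$-closed subsets of $X$; continuity of $J$ is with respect to $\tau(d^s)$. $J$ and $F$ have the approximate mix-point property if $\inf_{x\in X}\sup_{y\in Fx}d^s(Jx,y)=0$. *)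

From Stdlib Require Import Reals Lra.
Open Scope R_scope.

Definition quasi_pseudometric {X : Type} (d : X -> X -> R) : Prop :=
  (forall x y, 0 <= d x y) /\ (forall x, d x x = 0) /\
  (forall x y z, d x z <= d x y + d y z).

Definition T0 {X : Type} (d : X -> X -> R) : Prop :=
  forall x y, d x y = 0 -> d y x = 0 -> x = y.

Definition ds {X : Type} (d : X -> X -> R) (x y : X) : R := Rmax (d x y) (d y x).

Definition ds_cauchy {X : Type} (d : X -> X -> R) (u : nat -> X) : Prop :=
  forall e, 0 < e -> exists N, forall m n, (N <= m)%nat -> (N <= n)%nat -> ds d (u m) (u n) < e.

Definition ds_converges {X : Type} (d : X -> X -> R) (u : nat -> X) (x : X) : Prop :=
  forall e, 0 < e -> exists N, forall n, (N <= n)%nat -> ds d (u n) x < e.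

Definition bicomplete {X : Type} (d : X -> X -> R) : Prop :=
  T0 d /\ forall u, ds_cauchy d u -> exists x, ds_converges d u x.

(* CB(X): nonempty, d^s-bounded, tau(d^s)-closed subsets *)
Definition CB {X : Type} (d : X -> X -> R) (A : X -> Prop) : Prop :=
  (exists a, A a) /\
  (exists M, forall a b, A a -> A b -> ds d a b <= M) /\
  (forall x, (forall e, 0 < e -> exists a, A a /\ ds d x a < e) -> A x).

Definition ds_continuous {X : Type} (d : X -> X -> R) (J : X -> X) : Prop :=
  forall x e, 0 < e -> exists del, 0 < del /\
    forall y, ds d x y < del -> ds d (J x) (J y) < e.

(* H(A,B) <= c, unfolded:
   sup_{a in A} inf_{b in B} d(a,b) <= c  and  sup_{b in B} inf_{a in A} d(a,b) <= c *)
Definition H_le {X : Type} (d : X -> X -> R) (A B : X -> Prop) (c : R) : Prop :=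
  (forall a, A a -> forall e, 0 < e -> exists b, B b /\ d a b < c + e) /\
  (forall b, B b -> forall e, 0 < e -> exists a, A a /\ d a b < c + e).

(* approximate mix-point property: inf_x sup_{y in Fx} d^s(Jx,y) = 0 *)
Definition approx_mix_point {X : Type} (d : X -> X -> R) (J : X -> X)
  (F : X -> X -> Prop) : Prop :=
  forall e, 0 < e -> exists x, forall y, F x y -> ds d (J x) y < e.

(* Pick approximate mix-points x_n with J x_n within 1/(n+1) of every point of F x_n.
   Passing from J x_n to J x_m through F x_n and F x_m and using the Hausdorff bound
   gives (1 - alpha) d(J x_n, J x_m) <= 1/(n+1) + 1/(m+1), so the expansiveness of J
   makes (x_n) d^s-Cauchy.  Its limit x satisfies J x_n -> J x by continuity, and the
   Hausdorff bound in both directions puts points of F x arbitrarily close to J x;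
   since F x is closed, J x lies in F x. *)

From Stdlib Require Import Reals Lra Psatz ClassicalEpsilon.
Open Scope R_scope.

Lemma inv_INR_succ_eventually_lt (c : R) :
  0 < c -> exists N, forall n, (N <= n)%nat -> / (INR n + 1) < c.
Proof.
  intros Hc. destruct (archimed_cor1 c Hc) as [N [HN HN0]].
  exists N. intros n Hn.
  apply Rle_lt_trans with (/ INR N); auto.
  apply Rinv_le_contravar.
  - now apply lt_0_INR.
  - apply le_INR in Hn; lra.
Qed.

Lemma inv_INR_succ_pos (n : nat) : 0 < / (INR n + 1).
Proof. apply Rinv_0_lt_compat; pose proof (pos_INR n); lra. Qed.

Section QuasiPseudometric.

Context {X : Type} (d : X -> X -> R).
Hypothesis d_ge0 : forall x y, 0 <= d x y.
Hypothesis d_triangle : forall x y z, d x z <= d x y + d y z.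

Lemma ds_ge_l (x y : X) : d x y <= ds d x y.
Proof. apply Rmax_l. Qed.

Lemma ds_ge_r (x y : X) : d y x <= ds d x y.
Proof. apply Rmax_r. Qed.

Lemma ds_sym (x y : X) : ds d x y = ds d y x.
Proof. apply Rmax_comm. Qed.

Lemma ds_lt (x y : X) (e : R) : d x y < e -> d y x < e -> ds d x y < e.
Proof. now apply Rmax_lub_lt. Qed.

Lemma ds_converges_continuous (J : X -> X) (u : nat -> X) (x : X) :
  ds_continuous d J -> ds_converges d u x ->
  ds_converges d (fun n => J (u n)) (J x).
Proof.
  intros HJ Hu e He.
  destruct (HJ x e He) as [del [Hdel HJdel]].
  destruct (Hu del Hdel) as [N HN].
  exists N. intros n Hn.
  rewrite ds_sym. apply HJdel. rewrite ds_sym. now apply HN.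
Qed.

Lemma ds_cauchy_of_scaled_dist_le (u : nat -> X) (K : R) :
  0 < K -> (forall n m, K * d (u n) (u m) <= / (INR n + 1) + / (INR m + 1)) ->
  ds_cauchy d u.
Proof.
  intros HK Hu e He.
  assert (HKe : 0 < K * e / 2) by nra.
  destruct (inv_INR_succ_eventually_lt _ HKe) as [N HN].
  exists N. intros m n Hm Hn.
  pose proof (HN m Hm). pose proof (HN n Hn).
  pose proof (Hu m n). pose proof (Hu n m).
  apply ds_lt; apply (Rmult_lt_reg_l K); nra.
Qed.

Definition within (p : X) (A : X -> Prop) (e : R) : Prop :=
  forall y, A y -> ds d p y < e.

Lemma d_le_of_H_le (A B : X -> Prop) (p q : X) (e e' c : R) :
  (exists a, A a) -> within p A e -> within q B e' -> H_le d A B c ->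
  d p q <= e + c + e'.
Proof.
  intros [y Hy] HA HB [HAB _].
  apply Rle_plus_epsilon. intros eps Heps.
  destruct (HAB y Hy eps Heps) as [z [Hz Hyz]].
  pose proof (HA y Hy). pose proof (HB z Hz).
  pose proof (ds_ge_l p y). pose proof (ds_ge_r q z).
  pose proof (d_triangle p y q). pose proof (d_triangle y z q).
  lra.
Qed.

Lemma exists_near_of_H_le (A B : X -> Prop) (p q : X) (c c' del : R) :
  (exists b, B b) -> within q B del -> H_le d B A c -> H_le d A B c' ->
  c <= del -> c' <= del -> ds d p q < del ->
  exists a, A a /\ ds d p a < 4 * del.
Proof.
  intros [y Hy] HB [HBA _] [HAB _] Hc Hc' Hpq.
  assert (Hdel : 0 < del) by (pose proof (d_ge0 p q); pose proof (ds_ge_l p q); lra).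
  destruct (HBA y Hy del Hdel) as [a [Ha Hya]].
  destruct (HAB a Ha del Hdel) as [b [Hb Hab]].
  exists a. split; [exact Ha|].
  pose proof (HB y Hy). pose proof (HB b Hb).
  pose proof (ds_ge_l p q). pose proof (ds_ge_r p q).
  pose proof (ds_ge_l q y). pose proof (ds_ge_r q b).
  pose proof (d_triangle p q y). pose proof (d_triangle p y a).
  pose proof (d_triangle a b q). pose proof (d_triangle a q p).
  apply ds_lt; lra.
Qed.

End QuasiPseudometric.

Section MixPoints.

Context {X : Type} (d : X -> X -> R) (J : X -> X) (F : X -> X -> Prop) (alpha : R).
Hypothesis d_ge0 : forall x y, 0 <= d x y.
Hypothesis d_triangle : forall x y z, d x z <= d x y + d y z.
Hypothesis F_nonempty : forall x, exists y, F x y.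
Hypothesis alpha_lt1 : alpha < 1.
Hypothesis F_H_le : forall x y, H_le d (F x) (F y) (alpha * d (J x) (J y)).

Lemma approx_mix_point_sequence :
  approx_mix_point d J F ->
  exists u : nat -> X, forall n, within d (J (u n)) (F (u n)) (/ (INR n + 1)).
Proof.
  intros Hmix.
  apply (choice (fun n x => within d (J x) (F x) (/ (INR n + 1)))).
  intros n. exact (Hmix _ (inv_INR_succ_pos n)).
Qed.

Lemma approx_mix_points_close (x y : X) (e e' : R) :
  within d (J x) (F x) e -> within d (J y) (F y) e' ->
  (1 - alpha) * d (J x) (J y) <= e + e'.
Proof.
  intros Hx Hy.
  pose proof (d_le_of_H_le d d_triangle _ _ _ _ _ _ _ (F_nonempty x) Hx Hy (F_H_le x y)).
  lra.
Qed.

Lemma approx_mix_limit_near (x : X) (u : nat -> X) :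
  (forall n, within d (J (u n)) (F (u n)) (/ (INR n + 1))) ->
  ds_converges d (fun n => J (u n)) (J x) ->
  forall e, 0 < e -> exists a, F x a /\ ds d (J x) a < e.
Proof.
  intros Hu HJu e He.
  assert (Hdel : 0 < e / 4) by lra.
  destruct (HJu _ Hdel) as [N1 HN1].
  destruct (inv_INR_succ_eventually_lt _ Hdel) as [N2 HN2].
  set (n := (N1 + N2)%nat).
  assert (Hn1 : ds d (J (u n)) (J x) < e / 4) by (apply HN1; unfold n; lia).
  assert (Hn2 : / (INR n + 1) < e / 4) by (apply HN2; unfold n; lia).
  assert (Hwithin : within d (J (u n)) (F (u n)) (e / 4)).
  { intros y Hy. pose proof (Hu n y Hy). lra. }
  assert (Hnear : forall p q, ds d p q = ds d (J (u n)) (J x) ->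
                  alpha * d p q <= e / 4 /\ ds d p q < e / 4).
  { intros p q Hpq. pose proof (ds_ge_l d p q). pose proof (d_ge0 p q). split; nra. }
  destruct (Hnear _ _ eq_refl) as [Hc _].
  destruct (Hnear _ _ (ds_sym d (J x) (J (u n)))) as [Hc' Hxn].
  destruct (exists_near_of_H_le d d_ge0 d_triangle (F x) (F (u n)) (J x) (J (u n))
              _ _ (e / 4) (F_nonempty (u n)) Hwithin (F_H_le (u n) x) (F_H_le x (u n))
              Hc Hc' Hxn) as [a [Ha Hxa]].
  exists a. split; [exact Ha | lra].
Qed.

End MixPoints.

Theorem mainTheorem5 (X : Type) (d : X -> X -> R) (J : X -> X) (F : X -> X -> Prop)
  (r alpha : R)
  (Hd : quasi_pseudometric d) (Hbi : bicomplete d)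
  (HJc : ds_continuous d J)
  (Hr : 0 < r) (HJ : forall x y, r * d x y <= d (J x) (J y))
  (HF : forall x, CB d (F x))
  (Ha0 : 0 < alpha) (Ha1 : alpha < 1) (Hra : r * alpha < 1)
  (HH : forall x y, H_le d (F x) (F y) (alpha * d (J x) (J y)))
  (Hmix : approx_mix_point d J F) :
  exists x, F x (J x).
Proof.
  destruct Hd as [Hge0 [_ Htri]].
  destruct Hbi as [_ Hcomplete].
  assert (Hne : forall x, exists y, F x y) by (intros x; apply (HF x)).
  destruct (approx_mix_point_sequence d J F Hmix) as [u Hu].
  assert (Hcauchy : ds_cauchy d u).
  { apply (ds_cauchy_of_scaled_dist_le d u ((1 - alpha) * r)); [nra|].
    intros n m.
    pose proof (approx_mix_points_close d J F alpha Htri Hne HH _ _ _ _ (Hu n) (Hu m)).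
    pose proof (HJ (u n) (u m)). nra. }
  destruct (Hcomplete u Hcauchy) as [x Hx].
  exists x. apply (HF x).
  apply (approx_mix_limit_near d J F alpha Hge0 Htri Hne Ha1 HH x u Hu).
  exact (ds_converges_continuous d J u x HJc Hx).
Qed.
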